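(* Let $X$ be a finite set. \begin{enumerate} \item Let $(p_B)_{B\subseteq X}$ be nonnegative reals summing to $1$, let $\tilde p_B=(p_B+p_{X\setminus B})/2$, and for $A\subseteq X$ let $s_A=\sum_{B\in\mathcal{S}_A}p_B$ where $\mathcal{S}_A=\{B\subseteq X: A\cap B\neq\emptyset,\ A\cap(X\setminus B)\neq\emptyset\}$. For $A\subseteq X$ define $\gamma_A=\sum_{B\subseteq X:\,|A\cap B|\text{ odd}}\tilde p_B$ if $|A|$ is even and $\gamma_A=0$ if $|A|$ is odd. Then for all $A,B\subseteq X$, \[ \gamma_A=\sum_{C\subseteq A}(-2)^{|C|-2}s_C,\qquad s_B=\frac{1}{2^{|B|-2}}\sum_{C\subseteq B}\gamma_C . \] \item Let $T$ be a phylogenetic tree with leaf set $X$ and nonnegative branch lengths. For $B\subseteq X$ let $\tilde w_B=w_{B|X\setminus B}/2$, where $w_{B|X\setminus B}$ is the length of the edge of $T$ whose deletion splits the leaves into $B$ and $X\setminus B$ if such an edge exists, and $0$ otherwise. Let $\delta_A$ be the sum of branch lengths of the smallest subtree of $T$ connecting $A$ ($\delta_A=0$ if $|A|\le 1$). For $A\subseteq X$ define $\mu_A=\sum_{B\subseteq X:\,|A\cap B|\text{ odd}}\tilde w_B$ if $|A|$ is even and $\mu_A=0$ if $|A|$ is odd. Then for all $A,B\subseteq X$, \[ \mu_A=\sum_{C\subseteq A}(-2)^{|C|-2}\delta_C,\qquad \delta_B=\frac{1}{2^{|B|-2}}\sum_{C\subseteq B}\mu_C . \] \end{enumerate}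
   Context: $p_B$ is the probability that at a bi-allelic site exactly the taxa in $B$ have state $1$; $s_A$ is the probability that a site is non-constant over $A$. A phylogenetic tree with leaf set $X$ is a tree whose leaves are bijectively labelled by $X$ and whose internal vertices have degree at least $3$. *)

From HB Require Import structures.
From mathcomp Require Import all_boot all_order all_algebra.
Set Implicit Arguments. Unset Strict Implicit. Unset Printing Implicit Defensive.
Import Order.TTheory GRing.Theory Num.Theory.
Local Open Scope ring_scope.

Section Part1.
Variables (X : finType) (R : realFieldType) (p : {set X} -> R).

Definition ptilde (B : {set X}) : R := (p B + p (~: B)) / 2.

Definition splitsA (A B : {set X}) : bool :=
  (A :&: B != set0) && (A :&: ~: B != set0).

Definition s_ (A : {set X}) : R := \sum_(B : {set X} | splitsA A B) p B.

Definition gamma_ (A : {set X}) : R :=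
  if odd #|A| then 0 else \sum_(B : {set X} | odd #|A :&: B|) ptilde B.
End Part1.

Section Tree.
Variables (V : finType) (e : rel V).

Definition is_tree : Prop :=
  symmetric e /\ irreflexive e /\ (forall x y, connect e x y) /\
  (forall c : seq V, (3 <= size c)%N -> ~~ (cycle e c && uniq c)).

Definition deg (v : V) : nat := #|[set u | e v u]|.
Definition is_leaf (v : V) : bool := (deg v <= 1)%N.

Definition tree_edges : {set {set V}} :=
  [set [set u; v] | u in V, v in V & e u v].

Definition del_edge (u v : V) : rel V :=
  fun x y => e x y && ([set x; y] != [set u; v]).

Variables (X : finType) (lab : X -> V) (R : realFieldType) (l : {set V} -> R).

Definition phylo_tree : Prop :=
  is_tree /\ injective lab /\ (forall v, is_leaf v = (v \in codom lab)) /\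
  (forall v, ~~ is_leaf v -> (3 <= deg v)%N).

Definition side (u v : V) : {set X} :=
  [set x | connect (del_edge u v) u (lab x)].

(* w_{B|X\B}: length of the edge inducing split B|X\B (0 if none);
   each such edge is counted once, via its orientation (u,v) with u on B's side *)
Definition wsplit (B : {set X}) : R :=
  \sum_(uv : V * V | e uv.1 uv.2 && (side uv.1 uv.2 == B)) l [set uv.1; uv.2].

Definition wtilde (B : {set X}) : R := wsplit B / 2.

Definition connects (A : {set X}) (S : {set {set V}}) : bool :=
  [forall a in A, forall b in A,
     connect (fun x y => e x y && ([set x; y] \in S)) (lab a) (lab b)].

Definition min_subtree (A : {set X}) : {set {set V}} :=
  \bigcap_(S in powerset tree_edges | connects A S) S.

Definition delta (A : {set X}) : R := \sum_(s in min_subtree A) l s.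

Definition mu (A : {set X}) : R :=
  if odd #|A| then 0 else \sum_(B : {set X} | odd #|A :&: B|) wtilde B.
End Tree.

From HB Require Import structures.
From mathcomp Require Import all_boot all_order all_algebra.
From mathcomp Require Import ring.
Import Order.TTheory GRing.Theory Num.Theory.
Local Open Scope ring_scope.

(* Both parts are one linear identity summed against weights. For a bipartition
   D | X \ D put Z_C(F) = [C and F are disjoint]. The indicator that D splits C is
   Z_C(0) - Z_C(D) - Z_C(X \ D) + Z_C(X), and 4 [|A| even, |A n D| odd] is the same
   signed combination of (-1)^|A n F|. The subset sums
     sum_(C <= A) (-2)^|C| Z_C(F) = (-1)^|A \ F|,   sum_(C <= B) (-1)^|C n F| = 2^|B| Z_B(F),
   both instances of sum_(C <= B) prod_(i in C) g_i = prod_(i in B) (1 + g_i), turn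
   each indicator into the other. Then s and gamma are the sums of p_B against the two
   indicators, and delta and mu are the sums of half edge lengths over oriented edges
   against them, since an edge lies on the subtree spanning C exactly when deleting it
   separates C. This only uses that the graph is connected. *)

Set Implicit Arguments. Unset Strict Implicit.

Section SubsetSums.
Variables (X : finType) (R : comPzRingType).

Lemma sum_subsets_prod (B : {set X}) (g : X -> R) :
  \sum_(C : {set X} | C \subset B) \prod_(i in C) g i = \prod_(i in B) (1 + g i).
Proof.
rewrite big_mkcond /=.
have -> : \prod_(i in B) (1 + g i) = \prod_i ((if i \in B then g i else 0) + 1).
  by rewrite big_mkcond; apply: eq_bigr => i _; case: (i \in B); rewrite ?add0r // addrC.
rewrite (bigA_distr 1 +%R) /=; apply: eq_big => // C _.
case: ifP => CB.
  rewrite big_mkcond; apply: eq_bigr => i _; case: ifP => // iC.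
  by rewrite (subsetP CB _ iC).
have /subsetPn [i iC iB] := negbT CB.
by rewrite (bigD1 i) //= iC (negbTE iB) mul0r.
Qed.

Lemma prod_mem_if (C F : {set X}) (a b : R) :
  \prod_(i in C) (if i \in F then a else b) = a ^+ #|C :&: F| * b ^+ #|C :\: F|.
Proof.
rewrite (bigID (mem F)) /= -!prodr_const; congr (_ * _); apply: eq_big => i.
- by rewrite inE.
- by case/andP => _ ->.
- by rewrite inE andbC.
- by case/andP => _ /negbTE ->.
Qed.

Lemma sum_subsets_sign (B F : {set X}) :
  \sum_(C : {set X} | C \subset B) (-1 : R) ^+ #|C :&: F| = 2 ^+ #|B| * [disjoint B & F]%:R.
Proof.
have E (C : {set X}) : (-1) ^+ #|C :&: F| = \prod_(i in C) (if i \in F then -1 else 1 : R).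
  by rewrite prod_mem_if expr1n mulr1.
under eq_bigr => C _ do rewrite E.
rewrite sum_subsets_prod.
rewrite (eq_bigr (fun i => if i \in F then 0 else 2)); last first.
  by move=> i _; case: (i \in F); rewrite ?addrN.
rewrite prod_mem_if expr0n -setI_eq0 cards_eq0.
case: eqP => [BF|_]; last by rewrite mul0r !mulr0.
by rewrite -(cardsID F B) BF cards0 add0n mul1r mulr1.
Qed.

Lemma sum_subsets_disjoint (A F : {set X}) :
  \sum_(C : {set X} | C \subset A) (-2 : R) ^+ #|C| * [disjoint C & F]%:R = (-1) ^+ #|A :\: F|.
Proof.
have E (C : {set X}) :
    (-2) ^+ #|C| * [disjoint C & F]%:R = \prod_(i in C) (if i \in F then 0 else -2 : R).
  rewrite prod_mem_if expr0n -setI_eq0 cards_eq0.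
  case: eqP => [CF|_]; last by rewrite mulr0 mul0r.
  by rewrite -{1}(cardsID F C) CF cards0 add0n mul1r mulr1.
under eq_bigr => C _ do rewrite E.
rewrite sum_subsets_prod (eq_bigr (fun i => if i \in F then 1 else -1)).
  by rewrite prod_mem_if expr1n mul1r.
by move=> i _; case: (i \in F); rewrite ?addr0 //; ring.
Qed.

End SubsetSums.

Section SplitInversion.
Variables (X : finType) (R : numFieldType).

Definition evenodd (A D : {set X}) : bool := ~~ odd #|A| && odd #|A :&: D|.

Definition split_diff (f : {set X} -> R) (D : {set X}) : R :=
  f set0 - f D - f (~: D) + f setT.

Lemma split_diffZ (c : R) f D :
  split_diff (fun F => c * f F) D = c * split_diff f D.
Proof. by rewrite /split_diff; ring. Qed.

Lemma splitsA_diff (C D : {set X}) :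
  (splitsA C D)%:R = split_diff (fun F => [disjoint C & F]%:R) D.
Proof.
rewrite /splitsA /split_diff -!setI_eq0 setI0 eqxx setIT.
have -> : (C == set0) = (C :&: D == set0) && (C :&: ~: D == set0).
  by rewrite -setU_eq0 -setDE setID.
by case: (C :&: D == set0); case: (C :&: ~: D == set0); rewrite /=; ring.
Qed.

Lemma evenodd_diff (A D : {set X}) :
  (evenodd A D)%:R * 4 = split_diff (fun F => (-1) ^+ #|A :&: F|) D.
Proof.
rewrite /split_diff /evenodd setI0 cards0 setIT -setDE -(cardsID D A) exprD.
rewrite -(signr_odd _ #|A :&: D|) -(signr_odd _ #|A :\: D|) oddD.
by case: (odd #|A :&: D|); case: (odd #|A :\: D|); rewrite /=; ring.
Qed.

Lemma expfz_subn2 (x : R) (n : nat) : x != 0 -> x ^ ((n : int) - 2) = x ^+ n / x ^+ 2.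
Proof. by move=> x0; rewrite expfzDr // exprnP -exprnN. Qed.

Lemma evenodd_inversion (A D : {set X}) :
  (evenodd A D)%:R =
  \sum_(C : {set X} | C \subset A) (-2 : R) ^ ((#|C| : int) - 2) * (splitsA C D)%:R.
Proof.
have n2 : (-2 : R) != 0 by rewrite oppr_eq0 pnatr_eq0.
have n4 : (4 : R) != 0 by rewrite pnatr_eq0.
transitivity (((-2 : R) ^+ 2)^-1 * \sum_(C : {set X} | C \subset A)
    split_diff (fun F => (-2) ^+ #|C| * [disjoint C & F]%:R) D); last first.
  rewrite mulr_sumr; apply: eq_bigr => C _.
  by rewrite expfz_subn2 // splitsA_diff split_diffZ mulrCA mulrA.
rewrite /split_diff !big_split !sumrN /= !sum_subsets_disjoint.
rewrite setD0 setDT cards0 !setDE setCK -[_%:R](mulfK n4) evenodd_diff /split_diff.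
by rewrite setI0 cards0 setIT; field.
Qed.

Lemma splits_inversion (B D : {set X}) :
  (splitsA B D)%:R =
  ((2 : R) ^ ((#|B| : int) - 2))^-1 * \sum_(C : {set X} | C \subset B) (evenodd C D)%:R.
Proof.
have n2 : (2 : R) != 0 by rewrite pnatr_eq0.
have n4 : (4 : R) != 0 by rewrite pnatr_eq0.
under eq_bigr => C _ do rewrite -[_%:R](mulfK n4) evenodd_diff.
rewrite -mulr_suml /= /split_diff !big_split !sumrN /= !sum_subsets_sign.
have nB : (2 : R) ^+ #|B| != 0 by rewrite expf_neq0.
by rewrite splitsA_diff expfz_subn2 // /split_diff; field.
Qed.

Section Weighted.
Variables (I : finType) (q : I -> R) (f : I -> {set X}).

Lemma weighted_evenodd_inversion (A : {set X}) :
  \sum_i q i * (evenodd A (f i))%:R =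
  \sum_(C : {set X} | C \subset A)
     (-2 : R) ^ ((#|C| : int) - 2) * \sum_i q i * (splitsA C (f i))%:R.
Proof.
under eq_bigr => i _ do rewrite evenodd_inversion mulr_sumr.
rewrite exchange_big; apply: eq_bigr => C _; rewrite mulr_sumr.
by apply: eq_bigr => i _; rewrite mulrCA.
Qed.

Lemma weighted_splits_inversion (B : {set X}) :
  \sum_i q i * (splitsA B (f i))%:R =
  ((2 : R) ^ ((#|B| : int) - 2))^-1 *
  \sum_(C : {set X} | C \subset B) \sum_i q i * (evenodd C (f i))%:R.
Proof.
under eq_bigr => i _ do rewrite splits_inversion mulrCA mulr_sumr.
by rewrite -mulr_sumr exchange_big.
Qed.

End Weighted.
End SplitInversion.

Lemma sum_mul_natb (R : pzSemiRingType) (I : finType) (P : pred I) (F : I -> R) :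
  \sum_i F i * (P i)%:R = \sum_(i | P i) F i.
Proof. by rewrite [RHS]big_mkcond; apply: eq_bigr => i _; rewrite mulr_natr mulrb. Qed.

Section SitePatterns.
Variables (X : finType) (R : realFieldType) (p : {set X} -> R).

Lemma s_splitsA (C : {set X}) : s_ p C = \sum_B p B * (splitsA C B)%:R.
Proof. by rewrite sum_mul_natb. Qed.

Lemma gamma_evenodd (A : {set X}) : gamma_ p A = \sum_B p B * (evenodd A B)%:R.
Proof.
rewrite /gamma_ /evenodd; case: ifP => oA.
  by rewrite big1 // => B _; rewrite mulr0.
rewrite (@sum_mul_natb _ _ (fun B => odd #|A :&: B|)) /ptilde.
have oddC B : odd #|A :&: ~: B| = odd #|A :&: B|.
  by move: (cardsID B A); rewrite setDE => /(congr1 odd); rewrite oddD oA; case: odd; case: odd.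
under eq_bigr do rewrite mulrDl; rewrite big_split /=.
rewrite [Q in _ + Q](reindex_inj (@setC_inj X)) /= (eq_bigl _ _ oddC).
under [Q in _ + Q]eq_bigr do rewrite setCK.
by rewrite -big_split; apply: eq_bigr => B _; exact/esym/splitr.
Qed.

End SitePatterns.

Section ConnectedGraph.
Variables (V : finType) (e : rel V) (X : finType) (lab : X -> V).
Hypotheses (e_sym : symmetric e) (e_irr : irreflexive e)
  (e_conn : forall x y, connect e x y).

Lemma edge_in_tree_edges x y : e x y -> [set x; y] \in tree_edges e.
Proof. by move=> exy; apply/imset2P; exists x y; rewrite ?inE. Qed.

Lemma del_edge_sym u v : symmetric (del_edge e u v).
Proof. by move=> x y; rewrite /del_edge e_sym setUC. Qed.

Lemma connect_del_edge_ends u v w : e u v ->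
  connect (del_edge e u v) u w || connect (del_edge e u v) v w.
Proof.
move=> euv; pose a := [pred z | connect (del_edge e u v) u z || connect (del_edge e u v) v z].
have a_step x y : e x y -> x \in a -> y \in a.
  move=> exy; rewrite !inE.
  have [xy_uv|xy_uv] := eqVneq [set x; y] [set u; v].
    have : y \in [set u; v] by rewrite -xy_uv set22.
    by rewrite !inE => /orP[] /eqP ->; rewrite connect0 ?orbT.
  have dxy : del_edge e u v x y by rewrite /del_edge exy xy_uv.
  by case/orP => c; apply/orP; [left|right]; apply: connect_trans c (connect1 dxy).
have a_closed : closed e a.
  by move=> x y exy; apply/idP/idP; apply: a_step; rewrite // e_sym.
by have := closed_connect a_closed (e_conn u w); rewrite !inE connect0 /= => <-.
Qed.

Lemma connects_del_edge u v (C : {set X}) z :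
  (forall a, a \in C -> connect (del_edge e u v) z (lab a)) ->
  connects e lab C (tree_edges e :\ [set u; v]).
Proof.
move=> zC; apply/forallP => a; apply/implyP => aC; apply/forallP => b; apply/implyP => bC.
rewrite (eq_connect (e' := del_edge e u v)); last first.
  move=> x y; rewrite /del_edge in_setD1.
  by case exy: (e x y); rewrite //= edge_in_tree_edges // andbT.
apply: connect_trans (zC b bC).
by rewrite (sym_connect_sym (del_edge_sym u v)); apply: zC.
Qed.

Lemma min_subtree_sub (C : {set X}) : min_subtree e lab C \subset tree_edges e.
Proof.
apply: bigcap_inf; rewrite powersetE subxx /=.
apply/forallP => a; apply/implyP => _; apply/forallP => b; apply/implyP => _.
rewrite (eq_connect (e' := e)) //.
by move=> x y; case exy: (e x y); rewrite //= edge_in_tree_edges.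
Qed.

Lemma mem_min_subtree u v (C : {set X}) : e u v ->
  ([set u; v] \in min_subtree e lab C) = splitsA C (side e lab u v).
Proof.
move=> euv; apply/idP/idP => [uv_min|].
  apply/negPn/negP; rewrite /splitsA negb_and !negbK => C_one_side.
  have [z zC] : exists z, forall a, a \in C -> connect (del_edge e u v) z (lab a).
    case/orP: C_one_side => /eqP C0.
      exists v => a aC; have := connect_del_edge_ends (lab a) euv.
      have : a \notin C :&: side e lab u v by rewrite C0 inE.
      by rewrite inE aC /= inE => /negbTE ->.
    exists u => a aC; have : a \notin C :&: ~: side e lab u v by rewrite C0 inE.
    by rewrite !inE aC /= negbK.
  move/bigcapP: uv_min => /(_ (tree_edges e :\ [set u; v])).
  by rewrite powersetE subsetDl (connects_del_edge zC) in_setD1 eqxx => /(_ isT).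
case/andP => /set0Pn [a]; rewrite inE => /andP[aC a_side].
case/set0Pn => b; rewrite !inE => /andP[bC b_side].
apply/bigcapP => S /andP[_ /forallP/(_ a)/implyP/(_ aC)/forallP/(_ b)/implyP/(_ bC) ab_S].
apply/negPn/negP => uv_S; move: a_side b_side; rewrite !inE => a_side /negP; apply.
apply: connect_trans a_side (connect_sub _ ab_S) => x y /andP[exy xy_S].
by apply: connect1; rewrite /del_edge exy; apply: contraNneq uv_S => <-.
Qed.

Lemma set2_eqE (u v x y : V) : u != v ->
  ([set x; y] == [set u; v]) = ((x == u) && (y == v)) || ((x == v) && (y == u)).
Proof.
move=> uv; apply/idP/idP; last first.
  by case/orP => /andP[/eqP -> /eqP ->] //; rewrite setUC.
move/eqP=> xy_uv.
have : x \in [set u; v] by rewrite -xy_uv set21.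
have : y \in [set u; v] by rewrite -xy_uv set22.
have : u \in [set x; y] by rewrite xy_uv set21.
have : v \in [set x; y] by rewrite xy_uv set22.
rewrite !inE.
case: (eqVneq x u) => [->|xu]; case: (eqVneq y v) => [->|yv] //=.
- by rewrite orbF eq_sym (negbTE uv).
- by rewrite (negbTE uv).
- by move=> _ /eqP -> _ /eqP ->; rewrite !eqxx.
Qed.

Lemma card_oriented_edge (s : {set V}) : s \in tree_edges e ->
  #|[pred uv : V * V | e uv.1 uv.2 && ([set uv.1; uv.2] == s)]| = 2%N.
Proof.
case/imset2P => u v _; rewrite inE => /andP[_ euv] ->{s}.
have uv : u != v by apply: contraTneq euv => ->; rewrite e_irr.
transitivity #|[set (u, v); (v, u)]|; last by rewrite cards2 xpair_eqE (negbTE uv).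
apply: eq_card => -[x y]; rewrite !inE /= set2_eqE // !xpair_eqE.
apply/idP/idP => [/andP[] //|xy_uv]; rewrite xy_uv andbT.
by case/orP: xy_uv => /andP[/eqP -> /eqP ->] //; rewrite e_sym.
Qed.

Variables (R : realFieldType) (l : {set V} -> R).

Lemma sum_tree_edges_oriented (P : pred {set V}) (g : {set V} -> R) :
  \sum_(s in tree_edges e | P s) g s =
  \sum_(uv : V * V | e uv.1 uv.2 && P [set uv.1; uv.2]) g [set uv.1; uv.2] / 2.
Proof.
rewrite (partition_big (fun uv => [set uv.1; uv.2]) (fun s => (s \in tree_edges e) && P s));
  last by move=> uv /andP[euv ->]; rewrite edge_in_tree_edges.
apply: eq_bigr => s /andP[sE Ps].
rewrite (eq_bigr (fun _ => g s / 2)); last by move=> uv /andP[_ /eqP ->].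
rewrite (eq_bigl [pred uv : V * V | e uv.1 uv.2 && ([set uv.1; uv.2] == s)]); last first.
  by move=> uv /=; case: eqP => [->|]; rewrite ?Ps ?andbT ?andbF.
by rewrite sumr_const card_oriented_edge // mulr2n -splitr.
Qed.

Definition oriented_weight (uv : V * V) : R :=
  if e uv.1 uv.2 then l [set uv.1; uv.2] / 2 else 0.

Lemma delta_oriented (C : {set X}) :
  delta e lab l C = \sum_uv oriented_weight uv * (splitsA C (side e lab uv.1 uv.2))%:R.
Proof.
rewrite /delta (eq_bigl (fun s => (s \in tree_edges e) && (s \in min_subtree e lab C)));
  last by move=> s; rewrite andb_idl // => /(subsetP (min_subtree_sub C)).
rewrite sum_tree_edges_oriented big_mkcond; apply: eq_bigr => -[u v] _.
rewrite /oriented_weight /=; case euv: (e u v); last by rewrite mul0r.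
by rewrite mem_min_subtree // mulr_natr mulrb.
Qed.

Lemma mu_oriented (A : {set X}) :
  mu e lab l A = \sum_uv oriented_weight uv * (evenodd A (side e lab uv.1 uv.2))%:R.
Proof.
rewrite /mu /evenodd; case: ifP => oA.
  by rewrite big1 // => uv _; rewrite mulr0.
rewrite (@sum_mul_natb _ _ (fun uv => odd #|A :&: side e lab uv.1 uv.2|)) /=.
rewrite [RHS](partition_big (fun uv => side e lab uv.1 uv.2) (fun B => odd #|A :&: B|)) //.
apply: eq_bigr => B oB; rewrite /wtilde /wsplit mulr_suml.
rewrite big_mkcond [RHS]big_mkcond; apply: eq_bigr => uv _ /=.
rewrite /oriented_weight; case: eqP => [->|] /=; last by rewrite !andbF.
by rewrite oB !andbT; case: ifP.
Qed.

End ConnectedGraph.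

Unset Implicit Arguments.

Theorem theorem5 (X : finType) (R : realFieldType) :
  (forall p : {set X} -> R,
     (forall B, 0 <= p B) -> \sum_(B : {set X}) p B = 1 ->
     (forall A : {set X},
        gamma_ p A = \sum_(C : {set X} | C \subset A)
                       (-2 : R) ^ ((#|C| : int) - 2) * s_ p C) /\
     (forall B : {set X},
        s_ p B = ((2 : R) ^ ((#|B| : int) - 2))^-1 *
                 \sum_(C : {set X} | C \subset B) gamma_ p C)) /\
  (forall (V : finType) (e : rel V) (lab : X -> V) (l : {set V} -> R),
     phylo_tree e lab ->
     (forall u v, e u v -> 0 <= l [set u; v]) ->
     (forall A : {set X},
        mu e lab l A = \sum_(C : {set X} | C \subset A)
                         (-2 : R) ^ ((#|C| : int) - 2) * delta e lab l C) /\
     (forall B : {set X},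
        delta e lab l B = ((2 : R) ^ ((#|B| : int) - 2))^-1 *
                          \sum_(C : {set X} | C \subset B) mu e lab l C)).
Proof.
split=> [p _ _ | V e lab l [[e_sym [e_irr [e_conn _]]] _] _]; split=> [A|B].
- rewrite gamma_evenodd (weighted_evenodd_inversion p id).
  by under eq_bigr do rewrite -s_splitsA.
- rewrite s_splitsA (weighted_splits_inversion p id).
  by under eq_bigr do rewrite -gamma_evenodd.
- rewrite mu_oriented weighted_evenodd_inversion.
  by under eq_bigr do rewrite -(delta_oriented lab e_sym e_irr e_conn).
- rewrite (delta_oriented lab e_sym e_irr e_conn) weighted_splits_inversion.
  by under eq_bigr do rewrite -mu_oriented.
Qed.
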